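(* For all integers $d\geq 1$ and $L\geq 1$, the VC dimension of the class $\mathrm{GNN}_{\mathrm{anp}}(d,L)$ over the set $\mathcal{G}$ of all finite graphs is unbounded, that is, $\mathrm{VCdim}_{\mathcal{G}}(\mathrm{GNN}_{\mathrm{anp}}(d,L))=\infty$; this holds even when restricted to architectures having only a single (real) parameter.
   Context: $\mathcal{G}$ is the set of finite, undirected, simple graphs $G=(V(G),E(G),\ell)$ with vertex labels $\ell:V(G)\to\mathbb{N}$, of arbitrary order; $N_G(v)$ denotes the neighbourhood of $v$. A graph neural network (GNN) of depth $L$ assigns to each vertex an initial vector $\mathbf{h}^{(0)}_v\in\mathbb{R}^{d^{(0)}}$ depending only on the label $\ell(v)$, and for $t=1,\dots,L$ computes $\mathbf{h}^{(t)}_v = \mathsf{upd}^{(t)}\big(\mathbf{h}^{(t-1)}_v, \mathsf{agg}^{(t)}(\{\!\{\mathbf{h}^{(t-1)}_u : u\in N_G(v)\}\!\})\big)\in\mathbb{R}^{d^{(t)}}$, and outputs $\xi(G)=\mathsf{readout}(\{\!\{\mathbf{h}^{(L)}_v : v\in V(G)\}\!\})\in\mathbb{R}$, where $\{\!\{\cdot\}\!\}$ denotes a multiset and $\mathsf{upd}^{(t)},\mathsf{agg}^{(t)},\mathsf{readout}$ are parameterized functions with real (arbitrary precision) parameters. The width is $\max_t d^{(t)}$. $\mathrm{GNN}(d,L)$ is the class of GNNs of depth $L$ and width at most $d$. $\mathrm{GNN}_{\mathrm{anp}}(d,L)\subseteq\mathrm{GNN}(d,L)$ is the subclass in which every aggregation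 function is the sum of the neighbours' embeddings and the update and readout functions are single-layer perceptrons (an affine map followed by an activation function) using analytic non-polynomial activation functions. VC dimension: $\mathrm{VCdim}_{\mathcal{X}}(\mathcal{C})$ is the maximal $m$ such that there exist graphs $G_1,\dots,G_m\in\mathcal{X}$ and a fixed threshold $t\in\mathbb{R}$ such that for every $\mathbf{x}\in\{0,1\}^m$ there is a GNN in $\mathcal{C}$ whose output $\xi_{\mathbf{x}}$ satisfies $\xi_{\mathbf{x}}(G_i)\geq t$ if and only if $x_i=1$, for all $i\in[m]$; it is $\infty$ if no such maximum exists. *)

From HB Require Import structures.
From mathcomp Require Import all_boot all_order all_algebra.
From mathcomp Require Import classical_sets filter reals topology normedtype sequences.
Set Implicit Arguments. Unset Strict Implicit. Unset Printing Implicit Defensive.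
Import Order.TTheory GRing.Theory Num.Theory.
Import numFieldNormedType.Exports.
Local Open Scope classical_set_scope.
Local Open Scope ring_scope.

Record graph := Graph {
  gsize : nat;
  gadj  : rel 'I_gsize;
  glab  : 'I_gsize -> nat
}.

(* membership in the class \mathcal{G}: undirected (symmetric) and simple (irreflexive) *)
Definition simple_graph (G : graph) : Prop :=
  (forall u v, @gadj G u v = @gadj G v u) /\ (forall v, @gadj G v v = false).

Definition real_analytic {R : realType} (f : R -> R) : Prop :=
  forall x0 : R, exists2 r : R, 0 < r &
    exists a : nat -> R, forall x : R, `|x - x0| < r ->
      (fun n : nat => \sum_(k < n) a k * (x - x0) ^+ k) @ \oo --> f x.

Definition is_polynomial_fun {R : realType} (f : R -> R) : Prop :=
  exists p : {poly R}, forall x, f x = p.[x].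

Definition anp_activation {R : realType} (f : R -> R) : Prop :=
  real_analytic f /\ ~ is_polynomial_fun f.

(* Layer t+1 (t = 0..L-1) computes
     h^(t+1)_v = act t (W1 t * h^(t)_v + W2 t * (sum_{u in N(v)} h^(t)_u) + bias t)
   (activation applied coordinatewise), and the output is
     readout act (rw * sum_v h^(L)_v + rb). ---------- *)
Record sgnn (R : realType) (L : nat) := SGNN {
  dims : nat -> nat;
  init : nat -> 'cV[R]_(dims 0);
  W1   : forall t : nat, 'M[R]_(dims t.+1, dims t);
  W2   : forall t : nat, 'M[R]_(dims t.+1, dims t);
  bias : forall t : nat, 'cV[R]_(dims t.+1);
  act  : nat -> R -> R;                               (* activation of layer t+1 *)
  rw   : 'rV[R]_(dims L);
  rb   : R;
  ract : R -> R
}.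

Section Eval.
Variables (R : realType) (L : nat) (N : sgnn R L) (G : graph).

Fixpoint emb (t : nat) : 'I_(gsize G) -> 'cV[R]_(dims N t) :=
  match t return 'I_(gsize G) -> 'cV[R]_(dims N t) with
  | 0 => fun v => init N (@glab G v)
  | t'.+1 => fun v =>
      map_mx (act N t')
        (W1 N t' *m emb t' v
         + W2 N t' *m (\sum_(u < gsize G | @gadj G v u) emb t' u)
         + bias N t')
  end.

Definition gnn_out : R :=
  ract N ((rw N *m (\sum_(v < gsize G) emb L v)) 0 0 + rb N).
End Eval.

Definition in_GNN_anp {R : realType} (d L : nat) (N : sgnn R L) : Prop :=
  (forall t : nat, (t <= L)%N -> (dims N t <= d)%N) /\
  (forall t, (t < L)%N -> anp_activation (act N t)) /\
  anp_activation (ract N).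

(* ---------- Single real parameter: one scalar entry of the network ---------- *)
Inductive slot :=
  | SInit of nat & nat          (* entry i of init l *)
  | SW1 of nat & nat & nat      (* entry (i,j) of W1 t *)
  | SW2 of nat & nat & nat      (* entry (i,j) of W2 t *)
  | SBias of nat & nat          (* entry i of bias t *)
  | SRw of nat                  (* entry j of rw *)
  | SRb.

Definition set_param {R : realType} {L : nat} (N : sgnn R L) (s : slot) (th : R)
  : sgnn R L :=
  @SGNN R L (dims N)
    (fun l => \matrix_(i, j) if s is SInit l0 i0 then
                 (if (l == l0) && (i == i0 :> nat) then th else init N l i j)
               else init N l i j)
    (fun t => \matrix_(i, j) if s is SW1 t0 i0 j0 then
                 (if [&& t == t0, i == i0 :> nat & j == j0 :> nat] then th else W1 N t i j)
               else W1 N t i j)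
    (fun t => \matrix_(i, j) if s is SW2 t0 i0 j0 then
                 (if [&& t == t0, i == i0 :> nat & j == j0 :> nat] then th else W2 N t i j)
               else W2 N t i j)
    (fun t => \matrix_(i, j) if s is SBias t0 i0 then
                 (if (t == t0) && (i == i0 :> nat) then th else bias N t i j)
               else bias N t i j)
    (act N)
    (\matrix_(i, j) if s is SRw j0 then
        (if j == j0 :> nat then th else rw N i j) else rw N i j)
    (if s is SRb then th else rb N)
    (ract N).

(* C shatters m graphs of \mathcal{G} with a fixed threshold t *)
Definition shatters_m {R : realType} (C : (graph -> R) -> Prop) (m : nat) : Prop :=
  exists Gs : 'I_m -> graph, (forall i, simple_graph (Gs i)) /\
  exists t : R, forall x : 'I_m -> bool,
    exists2 f, C f & forall i, (t <= f (Gs i)) = x i.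

Definition VCdim_infinite {R : realType} (C : (graph -> R) -> Prop) : Prop :=
  forall m : nat, shatters_m C m.

(** The one-parameter family [n |-> sin (th * n)] already has infinite VC
    dimension on the naturals: with [th = pi (2A+1) / 2^(m+1)], the sign of
    [sin (th * 2^(m-i))] is the [i]-th binary digit of [A]. A width-one GNN
    whose layers all compute [sin (0 * h + 0 * sum + pi/2) = 1] and whose
    readout is [sin (th * sum_v 1)] realises this family on the number of
    vertices, and [sin] is analytic and not polynomial. *)
From mathcomp Require Import all_boot all_order all_algebra.
From mathcomp Require Import boolp reals topology normedtype sequences trigo.
From mathcomp Require Import ring zify.
Import Order.TTheory GRing.Theory Num.Theory.
Import numFieldNormedType.Exports.
Local Open Scope classical_set_scope.
Local Open Scope ring_scope.

Section SinAnp.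
Variable R : realType.

Lemma cvg_series_sin_coeff (h : R) : series (sin_coeff h) @ \oo --> sin h.
Proof. rewrite unlock; exact: is_cvg_series_sin_coeff. Qed.

Lemma cvg_series_cos_coeff (h : R) : series (cos_coeff h) @ \oo --> cos h.
Proof. rewrite unlock; exact: is_cvg_series_cos_coeff. Qed.

(* Taylor expansion at [x0] via [sin (x0 + h) = sin x0 cos h + cos x0 sin h]. *)
Lemma sin_analytic : real_analytic (@sin R).
Proof.
move=> x0; exists 1 => //.
exists (fun k => sin x0 * ((~~ odd k)%:R * (-1) ^+ k./2 * (k`!%:R)^-1)
               + cos x0 * ((odd k)%:R * (-1) ^+ k.-1./2 * (k`!%:R)^-1)) => x _.
set h := x - x0.
have -> : sin x = sin x0 * cos h + cos x0 * sin h by rewrite -sinD /h addrC subrK.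
have -> : (fun n => \sum_(k < n) (sin x0 * ((~~ odd k)%:R * (-1) ^+ k./2 * (k`!%:R)^-1)
               + cos x0 * ((odd k)%:R * (-1) ^+ k.-1./2 * (k`!%:R)^-1)) * h ^+ k)
   = (fun n => sin x0 * series (cos_coeff h) n + cos x0 * series (sin_coeff h) n).
  apply/funext => n; rewrite /series /= !big_mkord !mulr_sumr -big_split /=.
  by apply: eq_bigr => k _; rewrite cos_coeffE sin_coeffE /=; ring.
by apply: cvgD; apply: cvgMl_tmp; [exact: cvg_series_cos_coeff | exact: cvg_series_sin_coeff].
Qed.

(* A nonzero polynomial has fewer roots than its size, but [sin] vanishes at every [pi *+ k]. *)
Lemma sin_not_polynomial : ~ is_polynomial_fun (@sin R).
Proof.
move=> [p sinE].
have p0 : p = 0.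
  apply/eqP; apply: contraT => pn0.
  have := max_poly_roots (rs := [seq pi *+ k | k <- iota 0 (size p)]) pn0.
  rewrite size_map size_iota ltnn; apply.
    apply/allP => y /mapP [k _ ->]; rewrite /root -sinE.
    by rewrite -[pi *+ k]add0r (alternatingn (@sinDpi R)) sin0 mulr0.
  by rewrite map_inj_uniq ?iota_uniq //; apply: mulrIn; rewrite gt_eqF ?pi_gt0.
by have := sinE (pi / 2); rewrite sin_pihalf p0 horner0 => /eqP; rewrite oner_eq0.
Qed.

Lemma sin_anp : anp_activation (@sin R).
Proof. by split; [exact: sin_analytic | exact: sin_not_polynomial]. Qed.

End SinAnp.

Lemma exists_binary_digits (m : nat) (f : nat -> bool) :
  exists A, forall i, (i < m)%N -> odd (A %/ 2 ^ i) = f i.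
Proof.
elim: m f => [|m IH] f; first by exists 0%N.
have [A' digitsA'] := IH (fun i => f i.+1).
exists (f 0%N + A'.*2)%N => -[|i] ltim.
  by rewrite expn0 divn1 oddD odd_double addbF; case: (f 0%N).
rewrite expnS divnMA.
have -> : ((f 0%N + A'.*2) %/ 2 = A')%N by case: (f 0%N); lia.
exact: digitsA'.
Qed.

Lemma sin_pi_frac_ge0 (R : realType) (N P : nat) : (0 < P)%N -> (0 < N %% P)%N ->
  (0 <= sin (pi * N%:R / P%:R :> R)) = ~~ odd (N %/ P).
Proof.
move=> P0 r0; set a : R := pi * (N %% P)%:R / P%:R.
have Pr : (0 : R) < P%:R by rewrite ltr0n.
have a_in : 0 < a < pi.
  apply/andP; split; first by rewrite divr_gt0 // mulr_gt0 ?pi_gt0 // ltr0n.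
  by rewrite ltr_pdivrMr // ltr_pM2l ?pi_gt0 // ltr_nat ltn_mod.
have -> : pi * N%:R / P%:R = a + pi *+ (N %/ P).
  rewrite {1}(divn_eq N P) natrD natrM /a -mulr_natr.
  by field; rewrite gt_eqF.
rewrite (alternatingn (@sinDpi R)) -signr_odd.
have := sin_gt0_pi a_in.
case: (odd _) => /= sin_a; first by rewrite expr1 mulN1r oppr_ge0 leNgt sin_a.
by rewrite expr0 mul1r ltW.
Qed.

Lemma sin_mul_shatters_pow2 (R : realType) (m : nat) (x : 'I_m -> bool) :
  exists th : R, forall i : 'I_m, (0 <= sin (th * (2 ^ (m - i))%:R)) = x i.
Proof.
have [A digitsA] := exists_binary_digits m
  (fun k => if insub k is Some j then ~~ x j else false).
exists (pi * (A.*2.+1)%:R / (2 ^ m.+1)%:R) => i.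
have pow2_split : (2 ^ m.+1 = 2 ^ i.+1 * 2 ^ (m - i))%N.
  by rewrite -expnD; congr (expn _ _); have := ltn_ord i; lia.
have -> : pi * (A.*2.+1)%:R / (2 ^ m.+1)%:R * (2 ^ (m - i))%:R
          = pi * (A.*2.+1)%:R / (2 ^ i.+1)%:R :> R.
  by rewrite pow2_split natrM; field; rewrite !pnatr_eq0 -!lt0n !expn_gt0.
rewrite sin_pi_frac_ge0 ?expn_gt0 //; last first.
  have : odd (A.*2.+1 %% 2 ^ i.+1) by rewrite odd_mod ?oddX //= odd_double.
  by case: (A.*2.+1 %% _)%N.
rewrite expnS divnMA.
have -> : (A.*2.+1 %/ 2 = A)%N by lia.
by rewrite digitsA // valK negbK.
Qed.

Lemma sub_VCdim_infinite (R : realType) (C1 C2 : (graph -> R) -> Prop) :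
  (forall f, C1 f -> C2 f) -> VCdim_infinite C1 -> VCdim_infinite C2.
Proof.
move=> subC shattered m; have [Gs [simpleGs [t shatterGs]]] := shattered m.
exists Gs; split => //; exists t => x.
by have [f /subC C2f fx] := shatterGs x; exists f.
Qed.

Definition edgeless_graph (n : nat) : graph := @Graph n (fun _ _ => false) (fun _ => 0%N).

Lemma simple_edgeless_graph n : simple_graph (edgeless_graph n).
Proof. by []. Qed.

Section SinGnn.
Variables (R : realType) (L : nat).

Definition sin_gnn : sgnn R L :=
  @SGNN R L (fun _ => 1%N) (fun _ => 0) (fun _ => 0) (fun _ => 0)
    (fun _ => const_mx (pi / 2)) (fun _ => sin) 0 0 sin.

Lemma sin_gnn_anp (d : nat) : (1 <= d)%N -> in_GNN_anp d sin_gnn.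
Proof. by move=> d_gt0; split=> [t _ //|]; split=> [t _|]; exact: sin_anp. Qed.

Lemma emb_sin_gnn th (G : graph) t (v : 'I_(gsize G)) : (0 < t)%N ->
  @emb R L (set_param sin_gnn (SRw 0) th) G t v = const_mx 1.
Proof.
case: t => // t _; apply/matrixP => i j; rewrite /= !mxE.
rewrite big1 => [|k _]; last by rewrite !mxE mul0r.
rewrite big1 => [|k _]; last by rewrite !mxE mul0r.
by rewrite !add0r sin_pihalf.
Qed.

Lemma gnn_out_sin_gnn th (G : graph) : (0 < L)%N ->
  gnn_out (set_param sin_gnn (SRw 0) th) G = sin (th * (gsize G)%:R).
Proof.
move=> L_gt0; rewrite /gnn_out /= !mxE big_ord1 summxE.
under eq_bigr do rewrite emb_sin_gnn // mxE.
by rewrite !mxE addr0 sumr_const card_ord.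
Qed.

End SinGnn.

Theorem theorem5 (R : realType) (d L : nat) (hd : (1 <= d)%N) (hL : (1 <= L)%N) :
  VCdim_infinite (fun f : graph -> R =>
    exists N : sgnn R L, in_GNN_anp d N /\ f = gnn_out N)
  /\
  exists (N : sgnn R L) (s : slot), in_GNN_anp d N /\
    VCdim_infinite (fun f : graph -> R =>
      exists th : R, f = gnn_out (set_param N s th)).
Proof.
have one_param : VCdim_infinite (fun f : graph -> R =>
    exists th : R, f = gnn_out (set_param (sin_gnn R L) (SRw 0) th)).
  move=> m; exists (fun i : 'I_m => edgeless_graph (2 ^ (m - i))); split.
    by move=> i; exact: simple_edgeless_graph.
  exists 0 => x; have [th sin_thE] := @sin_mul_shatters_pow2 R m x.
  exists (gnn_out (set_param (sin_gnn R L) (SRw 0) th)); first by exists th.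
  by move=> i; rewrite gnn_out_sin_gnn //; exact: sin_thE.
split; last by exists (sin_gnn R L), (SRw 0); split; first exact: sin_gnn_anp.
apply: sub_VCdim_infinite one_param => _ [th ->].
by exists (set_param (sin_gnn R L) (SRw 0) th); split; first exact: sin_gnn_anp.
Qed.
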